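(* For every $n\geq 1$, \[ \mathcal{P}_n=\left\{1^k0^{n-p-k}1^p \;\middle|\; 0\leq p\leq n-1,\ 0\leq k\leq n-p-1\right\}\cup\left\{1^n\right\}. \]
   Context: For an integer $m\geq 0$, $\mathcal{L}_m$ is the line $y=mx-m^2$, $H_m(x,y)=y-mx+m^2$, $\mathcal{H}_m^+=\{H_m>0\}$ (the side containing $(-1,1)$) and $\mathcal{H}_m^-=\{H_m<0\}$. For $n\geq 0$, the regions of the arrangement of $\mathcal{L}_0,\dots,\mathcal{L}_{n-1}$ are the connected components of $\mathbb{R}^2\setminus(\mathcal{L}_0\cup\dots\cup\mathcal{L}_{n-1})$. Each region lies, for each $i$, entirely in $\mathcal{H}_i^+$ or entirely in $\mathcal{H}_i^-$; its code is the binary word $\sigma_0\sigma_1\cdots\sigma_{n-1}$ with $\sigma_i=1$ if the region lies in $\mathcal{H}_i^+$ and $\sigma_i=0$ if it lies in $\mathcal{H}_i^-$. $\mathcal{P}_n$ is the set of codes of the regions of this arrangement. Words are concatenated; $\sigma^k$ denotes $k$ consecutive copies of the letter $\sigma$, with $\sigma^k$ the empty word for $k\leq 0$. *)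

From HB Require Import structures.
From mathcomp Require Import all_boot all_order all_algebra.
From mathcomp Require Import all_classical all_reals all_analysis.
Import numFieldNormedType.Exports.
Set Implicit Arguments. Unset Strict Implicit. Unset Printing Implicit Defensive.
Import Order.TTheory GRing.Theory Num.Theory.
Local Open Scope classical_set_scope.
Local Open Scope ring_scope.

Definition Hline {R : realType} (m : nat) (p : R * R) : R :=
  p.2 - m%:R * p.1 + (m%:R) ^+ 2.

Definition arr_complement {R : realType} (n : nat) : set (R * R) :=
  [set p | forall i : nat, (i < n)%N -> Hline i p != 0].

Definition arr_region {R : realType} (n : nat) (C : set (R * R)) : Prop :=
  exists2 x : R * R, arr_complement n x & C = @connected_component (R * R)%type (@arr_complement R n) x.

(* codes: words sigma_0 ... sigma_{n-1} over bool (true = 1, false = 0),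
   sigma_i = 1 iff the region lies in H_i^+ *)
Definition is_code_of {R : realType} (n : nat) (C : set (R * R)) (w : seq bool) : Prop :=
  size w = n /\
  forall p, C p -> forall i : nat, (i < n)%N -> nth false w i = (0 < Hline i p).

Definition Pcodes (R : realType) (n : nat) : set (seq bool) :=
  [set w | exists C : set (R * R), arr_region n C /\ is_code_of n C w].

Definition Pformula (n : nat) : set (seq bool) :=
  [set w | exists p k : nat, (p <= n - 1)%N /\ (k <= n - p - 1)%N /\
             w = nseq k true ++ nseq (n - p - k) false ++ nseq p true]
  `|` [set nseq n true].

From HB Require Import structures.
From mathcomp Require Import all_boot all_order all_algebra.
From mathcomp Require Import all_classical all_reals all_analysis.
From mathcomp Require Import zify ring lra.
Import numFieldNormedType.Exports.
Import Order.TTheory GRing.Theory Num.Theory.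
Local Open Scope classical_set_scope.
Local Open Scope ring_scope.

(* A point (x, y) lies in H_m^- iff m^2 - m x + y < 0, a condition that is
   convex in m; hence the zeros of a code occupy consecutive positions and the
   code is 1^k 0^(l-k) 1^(n-l).  Conversely, with a = k - 1/2 and b = l - 1/2
   the point (a + b, a b) has H_m = (m - a)(m - b), whose sign pattern is
   exactly that word.  Since each H_m keeps its sign on a connected component
   of the complement, the codes of the regions are exactly the sign words of
   the points of the complement. *)

Definition block_word (n k l : nat) : seq bool :=
  nseq k true ++ nseq (l - k) false ++ nseq (n - l) true.

Definition zeros_convex (w : seq bool) : Prop :=
  forall i j l, (i <= j <= l)%N -> (l < size w)%N ->
  ~~ nth false w i -> ~~ nth false w l -> ~~ nth false w j.

Lemma size_block_word (n k l : nat) : (k <= l <= n)%N -> size (block_word n k l) = n.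
Proof. by move=> /andP[kl ln]; rewrite !size_cat !size_nseq; lia. Qed.

Lemma nth_block_word (n k l i : nat) : (i < n)%N ->
  nth false (block_word n k l) i = ~~ (k <= i < l)%N.
Proof.
move=> iN; rewrite !nth_cat !size_nseq !nth_nseq.
case: (ltnP i k) => ik //=.
case: (ltnP (i - k) (l - k)) => ilk /=.
  by have -> : (i < l)%N by lia.
have -> : (i < l)%N = false by lia.
by rewrite ifT //; lia.
Qed.

Lemma zeros_convex_block_word {w : seq bool} : zeros_convex w ->
  exists k l, (k <= l <= size w)%N /\ w = block_word (size w) k l.
Proof.
move=> cw; set n := size w.
(* l is one past the last zero (0 if there is none) and k is the first zero,
   clipped to l so that the all-ones word gets k = l = 0. *)
set l := (n - find negb (rev w))%N; set k := minn (find negb w) l.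
have ones_before i : (i < find negb w)%N -> nth false w i.
  by move=> /(before_find false) /negbFE.
have ones_after i : (l <= i < n)%N -> nth false w i.
  move=> /andP[li iN].
  have /(before_find false) : (n - i.+1 < find negb (rev w))%N by lia.
  rewrite nth_rev ?size_rev -/n; last by lia.
  have -> : (n - (n - i.+1).+1 = i)%N by lia.
  by move/negbFE.
exists k, l; split; first by rewrite geq_minr leq_subr.
apply: (@eq_from_nth _ false); first by rewrite size_block_word // geq_minr leq_subr.
move=> i iN; rewrite nth_block_word //.
have [/andP[ki il]|] := boolP (k <= i < l)%N; last first.
  by rewrite negb_and -!ltnNge => /orP[ik|li]; [apply: ones_before | apply: ones_after]; lia.
have last_zero : ~~ nth false w l.-1.
  have lpos : (find negb (rev w) < n)%N by lia.
  have := @nth_find _ false negb (rev w).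
  rewrite has_find size_rev nth_rev // => /(_ lpos).
  by have -> : l.-1 = (n - (find negb (rev w)).+1)%N by lia.
have first_zero : (find negb w <= l.-1)%N.
  by rewrite leqNgt; apply: contra last_zero => /ones_before.
have kE : k = find negb w by apply/minn_idPl; lia.
apply/negbTE/(cw k i l.-1) => //; [lia | lia |].
by rewrite kE; apply: nth_find; rewrite has_find; lia.
Qed.

Lemma Pformula_block_wordP (n : nat) (w : seq bool) :
  Pformula n w <-> exists k l, (k <= l <= n)%N /\ w = block_word n k l.
Proof.
split.
  case=> [[p [k [pn [kp ->]]]] | ->]; last first.
    by exists 0%N, 0%N; rewrite /block_word !subn0.
  exists k, (n - p)%N; split; first lia.
  by rewrite /block_word; congr (_ ++ _ ++ nseq _ _); lia.
move=> [k [l [/andP[kl ln] ->]]].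
have [<-|nkl] := eqVneq k l.
  by right; rewrite /block_word subnn cat0s -nseqD subnKC ?(leq_trans kl ln).
left; exists (n - l)%N, k; split; first lia.
split; first lia.
by rewrite /block_word; congr (_ ++ nseq _ _ ++ _); lia.
Qed.

Lemma connected_sign_constant {R : realType} {T : topologicalType} {A : set T}
    {f : T -> R} : connected A -> continuous f -> (forall q, A q -> f q != 0) ->
  forall x y, A x -> A y -> (0 < f x) = (0 < f y).
Proof.
move=> cA cf nz.
have fA_interval : is_interval (f @` A).
  apply/connected_intervalP/connected_continuous_connected => //.
  exact: continuous_subspaceT.
have no_crossing x y : A x -> A y -> f x < 0 -> 0 < f y -> False.
  move=> Ax Ay fx0 fy0.
  have [q Aq fq0] : (f @` A) 0.
    by apply: (fA_interval (f x) (f y)); [exact: imageP | exact: imageP | rewrite !ltW].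
  by move: (nz q Aq); rewrite fq0 eqxx.
have sgn z : A z -> (0 < f z) || (f z < 0) by move=> Az; rewrite orbC -neq_lt; exact: nz.
move=> x y Ax Ay.
case/orP: (sgn x Ax) => fx; case/orP: (sgn y Ay) => fy.
- by rewrite fx fy.
- by case: (no_crossing y x).
- by case: (no_crossing x y).
- by rewrite !ltNge !ltW.
Qed.

Lemma parabola_lt0_between (R : realFieldType) (x y a b c : R) : a <= b <= c ->
  y - a * x + a ^+ 2 < 0 -> y - c * x + c ^+ 2 < 0 -> y - b * x + b ^+ 2 < 0.
Proof.
rewrite !le_eqVlt => /andP[/predU1P[<-//|ab] /predU1P[->//|bc]] ha hc.
have ca : 0 < c - a by rewrite subr_gt0 (lt_trans ab).
rewrite -(pmulr_rlt0 _ ca).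
have : (c - b) * (y - a * x + a ^+ 2) < 0 by rewrite pmulr_rlt0 ?subr_gt0.
have : (b - a) * (y - c * x + c ^+ 2) < 0 by rewrite pmulr_rlt0 ?subr_gt0.
have : 0 < (b - a) * (c - b) by rewrite mulr_gt0 ?subr_gt0.
nra.
Qed.

Lemma natr_sub_half_lt0 (R : realFieldType) (m k : nat) :
  (m < k)%N -> m%:R - (k%:R - 2^-1) < 0 :> R.
Proof.
rewrite -(ler_nat R) -natr1 => mk.
have : 2^-1 < 1 :> R by rewrite invf_lt1 ?ltr1n.
lra.
Qed.

Lemma natr_sub_half_gt0 (R : realFieldType) (m k : nat) :
  (k <= m)%N -> 0 < m%:R - (k%:R - 2^-1) :> R.
Proof.
rewrite -(ler_nat R) => km.
have : 0 < 2^-1 :> R by rewrite invr_gt0.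
lra.
Qed.

Section Arrangement.
Context {R : realType}.

Lemma Hline_continuous (m : nat) : continuous (@Hline R m).
Proof.
move=> p; apply: cvgD; last exact: cvg_cst.
apply: cvgB; first exact: cvg_snd.
by apply: cvgM; [exact: cvg_cst | exact: cvg_fst].
Qed.

Lemma Hline_lt0_between (i j l : nat) (p : R * R) : (i <= j <= l)%N ->
  Hline i p < 0 -> Hline l p < 0 -> Hline j p < 0.
Proof. by move=> /andP[ij jl]; apply: parabola_lt0_between; rewrite !ler_nat ij jl. Qed.

Definition sign_word (n : nat) (p : R * R) : seq bool :=
  mkseq (fun i => 0 < Hline i p) n.

Lemma size_sign_word (n : nat) (p : R * R) : size (sign_word n p) = n.
Proof. exact: size_mkseq. Qed.

Lemma sign_word_zeros_convex {n : nat} {p : R * R} :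
  arr_complement n p -> zeros_convex (sign_word n p).
Proof.
rewrite /zeros_convex size_sign_word => pn i j l /andP[ij jl] ln.
have neg m : (m < n)%N -> ~~ nth false (sign_word n p) m -> Hline m p < 0.
  by move=> mn; rewrite nth_mkseq // -leNgt le_eqVlt (negbTE (pn m mn)).
move=> /(neg i (leq_ltn_trans (leq_trans ij jl) ln)) hi /(neg l ln) hl.
rewrite nth_mkseq ?(leq_ltn_trans jl) // -leNgt.
by apply/ltW; apply: (Hline_lt0_between i _ l) => //; rewrite ij jl.
Qed.

Lemma Pcodes_sign_word (n : nat) :
  Pcodes R n = [set sign_word n p | p in arr_complement n].
Proof.
apply/seteqP; split => w.
  move=> [_ [[x xn ->] [sw codew]]]; exists x => //.
  apply: (@eq_from_nth _ false); first by rewrite size_sign_word sw.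
  move=> i; rewrite size_sign_word => iN.
  by rewrite nth_mkseq // (codew x) //; exact: connected_component_refl.
move=> [x xn <-]; exists (connected_component (arr_complement n) x).
split; first by exists x.
split=> [|q xq i iN]; first exact: size_sign_word.
rewrite nth_mkseq //.
apply: (connected_sign_constant (@component_connected _ (arr_complement n) x)).
- exact: Hline_continuous.
- by move=> z /connected_component_sub/(_ i iN).
- exact: connected_component_refl.
- exact: xq.
Qed.

Definition block_point (k l : nat) : R * R :=
  let a := k%:R - 2^-1 in let b := l%:R - 2^-1 in (a + b, a * b).

Lemma Hline_block_point (k l m : nat) :
  Hline m (block_point k l) = (m%:R - (k%:R - 2^-1)) * (m%:R - (l%:R - 2^-1)).
Proof. by rewrite /Hline /=; ring. Qed.

Lemma Hline_block_point_lt0 (k l m : nat) :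
  (k <= m < l)%N -> Hline m (block_point k l) < 0.
Proof.
move=> /andP[km ml]; rewrite Hline_block_point.
by rewrite pmulr_rlt0 ?natr_sub_half_gt0 ?natr_sub_half_lt0.
Qed.

Lemma Hline_block_point_gt0 (k l m : nat) :
  (k <= l)%N -> ~~ (k <= m < l)%N -> 0 < Hline m (block_point k l).
Proof.
move=> kl; rewrite Hline_block_point negb_and -!ltnNge => /orP[mk|lm].
  by rewrite nmulr_rgt0 ?natr_sub_half_lt0 //; lia.
by rewrite mulr_gt0 ?natr_sub_half_gt0 //; lia.
Qed.

Lemma block_point_in_complement (n k l : nat) :
  (k <= l)%N -> arr_complement n (block_point k l).
Proof.
move=> kl i _; have [kil|kil] := boolP (k <= i < l)%N.
  by rewrite lt_eqF ?Hline_block_point_lt0.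
by rewrite gt_eqF ?Hline_block_point_gt0.
Qed.

Lemma sign_word_block_point (n k l : nat) :
  (k <= l <= n)%N -> sign_word n (block_point k l) = block_word n k l.
Proof.
move=> kln; apply: (@eq_from_nth _ false); first by rewrite size_sign_word size_block_word.
move=> i; rewrite size_sign_word => iN; rewrite nth_mkseq // nth_block_word //.
have [kil|kil] := boolP (k <= i < l)%N.
  by apply/negbTE; rewrite -leNgt ltW ?Hline_block_point_lt0.
by rewrite Hline_block_point_gt0 //; case/andP: kln.
Qed.

End Arrangement.

Theorem corollary19 (R : realType) (n : nat) : (1 <= n)%N ->
  Pcodes R n = Pformula n.
Proof.
(* The identity holds for n = 0 as well. *)
move=> _; rewrite Pcodes_sign_word; apply/seteqP; split => w.
  move=> [p pn <-]; apply/Pformula_block_wordP.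
  have := zeros_convex_block_word (sign_word_zeros_convex pn).
  by rewrite size_sign_word.
move=> /Pformula_block_wordP[k [l [/andP[kl ln] ->]]].
exists (block_point k l); first exact: block_point_in_complement.
by apply: sign_word_block_point; rewrite kl ln.
Qed.
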